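(* Let $n\ge3$, let every qubit carry the Hamiltonian $H_i=|1\rangle\langle1|$, and let $s=[n]$. For $|\mathrm{GHZ}_n\rangle=\frac1{\sqrt2}(|0\rangle^{\otimes n}+|1\rangle^{\otimes n})$ and $|W_n\rangle=\frac1{\sqrt n}\sum_{i=1}^n|0\cdots01_i0\cdots0\rangle$, $$M^{(s)}_E(|\mathrm{GHZ}_n\rangle)=1-\frac{1}{2^{n-1}},\qquad M^{(s)}_E(|W_n\rangle)=1-\frac{1}{2^{n-1}}\binom{n-1}{\lfloor\frac{n-1}{2}\rfloor}.$$ In particular $M^{(s)}_E(|\mathrm{GHZ}_n\rangle)>M^{(s)}_E(|W_n\rangle)$.
   Context: For $X\subseteq[n]$, $H_X=\sum_{i\in X}H_i$ with eigenvalues $0=\epsilon^X_0\le\epsilon^X_1\le\cdots$. For a state $\rho_X$ with eigenvalues $p_0\ge p_1\ge\cdots$ the passive-state energy is $\mathrm{tr}(\rho_X^pH_X)=\sum_jp_j\epsilon^X_j$. For a pure state $|\psi\rangle$ with marginals $\rho_X=\mathrm{tr}_{X^c}|\psi\rangle\langle\psi|$, $\Delta_{X|X^c}(|\psi\rangle)=\mathrm{tr}(\rho_X^pH_X)+\mathrm{tr}(\rho_{X^c}^pH_{X^c})$, set to $0$ for $X=\emptyset$ or $X=[n]$, and $M^{(s)}_E(|\psi\rangle)=2^{-|s|}\sum_{X\subseteq s}\Delta_{X|X^c}(|\psi\rangle)$. $\lfloor\cdot\rfloor$ is the floor function. *)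

From HB Require Import structures.
From mathcomp Require Import all_boot all_order all_algebra algC.
Set Implicit Arguments. Unset Strict Implicit. Unset Printing Implicit Defensive.
Import Order.TTheory GRing.Theory Num.Theory.
Local Open Scope ring_scope.

(* Computational basis configurations of n qubits: b i = true means |1> on qubit i. *)
Definition cfg (n : nat) := {ffun 'I_n -> bool}.

(* Basis configurations of the subsystem X (qubits outside X are set to 0,
   they play no role); this finite set indexes the computational basis of
   the Hilbert space of subsystem X. *)
Definition sub n (X : {set 'I_n}) : {set cfg n} :=
  [set b : cfg n | [forall i, (i \notin X) ==> ~~ b i]].

Definition glue n (X : {set 'I_n}) (a c : cfg n) : cfg n :=
  [ffun i => if i \in X then a i else c i].

Definition state n := cfg n -> algC.

(* Reduced density matrix rho_X = tr_{X^c} |psi><psi|. *)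
Definition rho n (psi : state n) (X : {set 'I_n}) : 'M[algC]_#|sub X| :=
  \matrix_(k, l) \sum_(c in sub (~: X))
     psi (glue X (enum_val k) c) * (psi (glue X (enum_val l) c))^*.

Definition Hloc n (X : {set 'I_n}) (i : 'I_n) : 'M[algC]_#|sub X| :=
  \matrix_(k, l) ((enum_val k == enum_val l)%:R * ((enum_val k : cfg n) i)%:R).

Definition HX n (X : {set 'I_n}) : 'M[algC]_#|sub X| := \sum_(i in X) Hloc X i.

Definition eigs m (A : 'M[algC]_m) : seq algC :=
  sval (closed_field_poly_normal (char_poly A)).

(* Passive-state energy tr(rho^p H) = sum_j p_j eps_j, p decreasing, eps increasing. *)
Definition passive_energy m (R H : 'M[algC]_m) : algC :=
  let p := sort (fun x y : algC => y <= x) (eigs R) in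
  let e := sort (fun x y : algC => x <= y) (eigs H) in
  \sum_(j < m) p`_j * e`_j.

Definition Delta n (psi : state n) (X : {set 'I_n}) : algC :=
  if (X == set0) || (X == setT) then 0 else
  passive_energy (rho psi X) (HX X) + passive_energy (rho psi (~: X)) (HX (~: X)).

Definition ME n (s : {set 'I_n}) (psi : state n) : algC :=
  (2 ^+ #|s|)^-1 * \sum_(X : {set 'I_n} | X \subset s) Delta psi X.

Definition GHZ n : state n := fun b =>
  if [forall i, ~~ b i] || [forall i, b i] then (sqrtC 2)^-1 else 0.

Definition Wst n : state n := fun b =>
  if #|[set i | b i]| == 1%N then (sqrtC n%:R)^-1 else 0.

Arguments GHZ n : clear implicits.
Arguments Wst n : clear implicits.

(* For a proper bipartition [X | X^c] both marginals of GHZ and W have rank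
   two: the GHZ marginal is [diag(1/2, 1/2)] on [|0..0>] and [|1..1>], and the
   W marginal is [(|X^c|/n) |0><0| + (|X|/n) |W_X><W_X|].  The two lowest
   levels of [H_X] are [0] and [1], so the passive energy is the smaller
   eigenvalue, giving [Delta = 1] for GHZ and [Delta = 2 min(|X|, n - |X|) / n]
   for W.  Averaging over the [2^n] subsets, the W value follows from
   [sum_k C(n,k) min(k, n-k) = n (2^(n-1) - C(n-1, (n-1)/2))]. *)

From mathcomp Require Import all_boot all_order all_algebra algC.
From mathcomp Require Import ring zify.
Set Implicit Arguments. Unset Strict Implicit. Unset Printing Implicit Defensive.
Import Order.TTheory GRing.Theory Num.Theory.

Lemma sum_bin n : \sum_(k < n.+1) 'C(n, k) = 2 ^ n.
Proof.
rewrite -[2]/(1 + 1) expnDn; apply: eq_bigr => k _.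
by rewrite !exp1n !muln1.
Qed.

Lemma sum_bin_mul_subn n : \sum_(k < n.+1) 'C(n, k) * (n - k) = n * 2 ^ n.-1.
Proof.
case: n => [|n]; first by rewrite big_ord_recl big_ord0.
rewrite -sum_bin big_distrr big_ord_recr /= subnn muln0 addn0.
by apply: eq_bigr => k _; rewrite mul_bin_down mulnC.
Qed.

(* Telescopes: [C(n,k) (n - 2k) = n C(n-1,k) - n C(n-1,k-1)]. *)
Lemma sum_bin_mul_gap n J : 0 < J -> 2 * J.-1 < n ->
  \sum_(k < J) 'C(n, k) * (n - k - k) = n * 'C(n.-1, J.-1).
Proof.
elim: J => [//|[|J] IH] _ hJ.
  by rewrite big_ord_recr big_ord0 /= bin0 !subn0 mul1n bin0 muln1.
rewrite big_ord_recr /= IH //; last by lia.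
have e1 := mul_bin_down n J.+1; have e2 := mul_bin_diag n J.
have le_bin : 'C(n, J.+1) * J.+1 <= 'C(n, J.+1) * (n - J.+1).
  by rewrite leq_mul2l; apply/orP; right; lia.
rewrite mulnBr; move: e1 e2 le_bin.
rewrite [(n - J.+1) * _]mulnC [J.+1 * _]mulnC.
set a := 'C(n, J.+1) * (n - J.+1); set b := 'C(n, J.+1) * J.+1.
set c := n * 'C(n.-1, J.+1); set d := n * 'C(n.-1, J).
lia.
Qed.

(* [minn k (n - k) = (n - k) - ((n - k) - k)], and the correction term only
   survives for [k <= (n - 1)/2]. *)
Lemma sum_bin_mul_minn n : 0 < n ->
  \sum_(k < n.+1) 'C(n, k) * minn k (n - k) + n * 'C(n.-1, n.-1./2) = n * 2 ^ n.-1.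
Proof.
move=> n_gt0; have J_le : n.-1./2.+1 <= n.+1 by lia.
have gap : \sum_(k < n.+1) 'C(n, k) * (n - k - k) = n * 'C(n.-1, n.-1./2).
  rewrite -(sum_bin_mul_gap (J := n.-1./2.+1)) //=; last by lia.
  rewrite -(subnKC J_le) big_split_ord /= [X in _ + X]big1 ?addn0 // => k _.
  by apply/eqP; rewrite muln_eq0 subn_eq0; apply/orP; right; lia.
rewrite -sum_bin_mul_subn -gap -big_split /=; apply: eq_bigr => k _.
by rewrite -mulnDr; congr (_ * _); lia.
Qed.

Lemma bin_half_gt1 n : 3 <= n -> 1 < 'C(n.-1, n.-1./2).
Proof.
move=> n_ge3; have [m -> {n n_ge3}] : exists m, n = m.+3 by exists (n - 3); lia.
rewrite /= binS; have h := odd_double_half m.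
have h1 : 0 < 'C(m.+1, m./2.+1) by rewrite bin_gt0; lia.
have h2 : 0 < 'C(m.+1, m./2) by rewrite bin_gt0; lia.
lia.
Qed.

Lemma sum_set_card (T : finType) (f : nat -> nat) :
  \sum_(A : {set T}) f #|A| = \sum_(k < #|T|.+1) 'C(#|T|, k) * f k.
Proof.
have card_lt (A : {set T}) : #|A| < #|T|.+1 by rewrite ltnS; apply: max_card.
rewrite (partition_big (fun A : {set T} => inord #|A| : 'I_#|T|.+1) xpredT) //=.
apply: eq_bigr => k _; rewrite -card_draws -sum_nat_const.
apply: eq_big => [A|A /eqP <-]; last by rewrite inordK.
by rewrite inE -val_eqE /= inordK.
Qed.

Lemma card_set_of (T : finType) : #|{set T}| = 2 ^ #|T|.
Proof.
rewrite -cardsT -card_powerset; apply: eq_card => A.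
by rewrite powersetE subsetT inE.
Qed.

Local Open Scope ring_scope.

Section Spectrum.
Variable m : nat.
Implicit Types A D H P R : 'M[algC]_m.

Lemma perm_eigs A (r : seq algC) :
  char_poly A = \prod_(x <- r) ('X - x%:P) -> perm_eq (eigs A) r.
Proof.
move=> chA; apply: prod_XsubC_eq.
rewrite /eigs; case: (closed_field_poly_normal _) => s /= chAE.
by rewrite -chA {1}chAE (monicP (char_poly_monic A)) scale1r.
Qed.

Lemma char_poly_similar A P D :
  P \in unitmx -> A *m P = P *m D -> char_poly A = char_poly D.
Proof.
move=> Pu AP; have -> : D = invmx P *m A *m P by rewrite -mulmxA AP mulKmx.
rewrite /char_poly /char_poly_mx.
have PVP : map_mx polyC (invmx P) *m map_mx polyC P = 1%:M.
  by rewrite -map_mxM mulVmx // map_mx1.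
have -> : 'X%:M - map_mx polyC (invmx P *m A *m P) =
    map_mx polyC (invmx P) *m ('X%:M - map_mx polyC A) *m map_mx polyC P.
  rewrite !map_mxM mulmxBr mulmxBl -(mulmxA _ _%:M) mul_scalar_mx.
  by rewrite -scalemxAr PVP scalemx1.
by rewrite !det_mulmx mulrAC -det_mulmx PVP det1 mul1r.
Qed.

Lemma sort_eigs (leT : rel algC) A s :
  {in Num.real &, total leT} -> transitive leT -> antisymmetric leT ->
  perm_eq (eigs A) s -> all (mem Num.real) s -> sorted leT s ->
  sort leT (eigs A) = s.
Proof.
move=> leT_total leT_tr leT_anti eigsE s_real s_sorted.
have eigs_real : all (mem Num.real) (eigs A) by rewrite (perm_all _ eigsE).
rewrite -(sorted_sort leT_tr s_sorted); apply/perm_sort_inP => //.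
- by move=> x y /(allP eigs_real) xR /(allP eigs_real) yR; apply: leT_total.
- by move=> x y z _ _ _; apply: leT_tr.
- by move=> x y _ _; apply: leT_anti.
Qed.

(* Sorting pairs [a] with level [0] and [b] with level [1]; all other
   populations vanish. *)
Lemma passive_energy_two_levels R H (a b : algC) r : (1 < m)%N ->
  perm_eq (eigs R) (a :: b :: nseq (m - 2) 0) -> b <= a -> 0 <= b ->
  sort <=%R (eigs H) = 0 :: 1 :: r -> passive_energy R H = b.
Proof.
move=> m_gt1 eigsR ba b_ge0 eigsH.
have bR : b \is Num.real by rewrite ger0_real.
have aR : a \is Num.real by rewrite ger0_real // (le_trans b_ge0).
have sortR : sort (fun x y : algC => y <= x) (eigs R) = a :: b :: nseq (m - 2) 0.
  apply: sort_eigs => //.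
  - by move=> x y xR yR; rewrite orbC real_leVge.
  - by move=> x y z xy yz; apply: le_trans yz xy.
  - by move=> x y; rewrite andbC; apply: le_anti.
  - by rewrite /= aR bR; apply/allP => x /nseqP [-> _]; apply: real0.
  - rewrite /= ba; case: (m - 2)%N => //= k; rewrite b_ge0 /=.
    by elim: k => //= k ->; rewrite lexx.
rewrite /passive_energy /= sortR eigsH.
case: m m_gt1 {eigsR sortR} => [|[|k]] // _.
rewrite !big_ord_recl /= mulr0 mulr1 add0r big1 ?addr0 // => j _.
by rewrite nth_nseq; case: ifP; rewrite mul0r.
Qed.

End Spectrum.

Lemma sumr_delta_r (R : pzSemiRingType) (T : finType) (A : {pred T}) u (F : T -> R) :
  u \in A -> \sum_(c in A) F c * (c == u)%:R = F u.
Proof.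
move=> uA; rewrite (bigD1 u) //= eqxx mulr1 big1 ?addr0 // => c /andP[_ /negPf->].
by rewrite mulr0.
Qed.

Lemma sumr_delta_l (R : pzSemiRingType) (T : finType) (A : {pred T}) u (F : T -> R) :
  u \in A -> \sum_(c in A) (u == c)%:R * F c = F u.
Proof.
move=> uA; rewrite -[RHS](sumr_delta_r F uA); apply: eq_bigr => c _.
by rewrite eq_sym; case: (c == u); rewrite ?mulr1 ?mul1r ?mulr0 ?mul0r.
Qed.

Lemma perm_enum_pair (T : finType) (A : {pred T}) u v : u \in A -> v \in A -> u != v ->
  exists2 s, perm_eq (enum A) [:: u, v & s] &
             {in s, forall c, [/\ c \in A, c != u & c != v]}.
Proof.
move=> uA vA uv; have enum_uniq := enum_uniq A.
have uE : u \in enum A by rewrite mem_enum.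
have vE : v \in rem u (enum A) by rewrite (mem_rem_uniq _ enum_uniq) inE eq_sym uv mem_enum.
exists (rem v (rem u (enum A))).
  by apply: (perm_trans (perm_to_rem uE)); rewrite perm_cons perm_to_rem.
move=> c; rewrite (mem_rem_uniq _ (rem_uniq _ enum_uniq)) inE.
by rewrite (mem_rem_uniq _ enum_uniq) inE mem_enum => /and3P[].
Qed.

Section Configurations.
Variable n : nat.
Implicit Types (X : {set 'I_n}) (a b c : cfg n) (i : 'I_n).

Definition cfg0 : cfg n := [ffun _ => false].
Definition cfg_at i : cfg n := [ffun j => j == i].
Definition cfg_on X : cfg n := [ffun i => i \in X].
Definition weight a : nat := #|[set i | a i]|.

Lemma cfg0_sub X : cfg0 \in sub X.
Proof. by rewrite inE; apply/forallP => i; rewrite ffunE implybT. Qed.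

Lemma cfg_at_sub X i : i \in X -> cfg_at i \in sub X.
Proof.
move=> iX; rewrite inE; apply/forallP => j; rewrite ffunE; apply/implyP.
by apply: contraNN => /eqP->.
Qed.

Lemma cfg_on_sub X : cfg_on X \in sub X.
Proof. by rewrite inE; apply/forallP => i; rewrite ffunE; apply/implyP. Qed.

Lemma cfg0_neq_at i : cfg0 != cfg_at i.
Proof. by apply/eqP => /ffunP /(_ i); rewrite !ffunE eqxx. Qed.

Lemma cfg0_neq_on X : X != set0 -> cfg0 != cfg_on X.
Proof. by case/set0Pn => i iX; apply/eqP => /ffunP /(_ i); rewrite !ffunE iX. Qed.

Lemma sub_notin X a i : a \in sub X -> i \notin X -> a i = false.
Proof. by rewrite inE => /forallP /(_ i) /implyP aX /aX /negbTE. Qed.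

Lemma eq_glue X a c a' c' :
  a \in sub X -> a' \in sub X -> c \in sub (~: X) -> c' \in sub (~: X) ->
  (glue X a c == glue X a' c') = (a == a') && (c == c').
Proof.
move=> aX a'X cY c'Y; apply/eqP/andP => [/ffunP eq_ac|[/eqP-> /eqP->] //].
split; apply/eqP/ffunP => i; have := eq_ac i; rewrite !ffunE;
  case: (boolP (i \in X)) => // iX _.
- by rewrite (sub_notin aX iX) (sub_notin a'X iX).
- by rewrite (sub_notin cY) ?(sub_notin c'Y) // inE iX.
Qed.

Lemma glue_cfg0 X : glue X cfg0 cfg0 = cfg0.
Proof. by apply/ffunP => i; rewrite !ffunE if_same. Qed.

Lemma glue_cfg_on X : glue X (cfg_on X) (cfg_on (~: X)) = [ffun _ => true].
Proof. by apply/ffunP => i; rewrite !ffunE inE; case: (i \in X). Qed.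

Lemma weight_eq0 a : (weight a == 0%N) = (a == cfg0).
Proof.
rewrite /weight cards_eq0; apply/eqP/eqP => [a0|->].
  apply/ffunP => i; rewrite ffunE; apply/negbTE/negP => ai.
  by have := in_set0 i; rewrite -a0 inE ai.
by apply/setP => i; rewrite !inE ffunE.
Qed.

Lemma weight_cfg0 : weight cfg0 = 0%N.
Proof. by apply/eqP; rewrite weight_eq0. Qed.

Lemma weight_at i : weight (cfg_at i) = 1%N.
Proof.
rewrite /weight -[RHS](cards1 i); congr #|pred_of_set _|.
by apply/setP => j; rewrite !inE ffunE.
Qed.

Lemma weight_sub X a : a \in sub X -> weight a = (\sum_(i in X) a i)%N.
Proof.
move=> aX; rewrite /weight -sum1_card big_mkcond [RHS]big_mkcond /=.
apply: eq_bigr => i _; rewrite inE.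
by case: (boolP (i \in X)) => // iX; rewrite (sub_notin aX iX).
Qed.

Lemma weight_glue X a c : a \in sub X -> c \in sub (~: X) ->
  weight (glue X a c) = (weight a + weight c)%N.
Proof.
move=> aX cY; rewrite (weight_sub (X := setT)) ?(weight_sub aX) ?(weight_sub cY); last first.
  by rewrite inE; apply/forallP => i; rewrite inE.
rewrite [in LHS](big_setID X) /= setTI setDE setTI.
congr (_ + _)%N; apply: eq_bigr => i; rewrite ffunE ?inE; first by move->.
by move/negPf->.
Qed.

Lemma sum_weight0 X : \sum_(c in sub X) (weight c == 0%N)%:R = 1 :> algC.
Proof.
rewrite -[RHS](sumr_delta_r (fun=> 1) (cfg0_sub X)).
by apply: eq_bigr => c _; rewrite weight_eq0 mul1r.
Qed.

Lemma sum_weight1 X : \sum_(c in sub X) (weight c == 1%N)%:R = #|X|%:R :> algC.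
Proof.
rewrite (eq_bigr (fun c => if weight c == 1%N then 1 else 0)); last first.
  by move=> c _; case: (_ == _).
rewrite -big_mkcondr /= sumr_const; congr _%:R.
have -> : #|[pred c in sub X | weight c == 1%N]| = #|[set cfg_at i | i in X]|.
  apply: eq_card => c; rewrite [LHS]inE.
  apply/andP/imsetP => [[cX /cards1P [i ci]]|[i iX ->]].
    have c_at : c = cfg_at i.
      apply/ffunP => j; have := congr1 (fun A : {set 'I_n} => j \in A) ci.
      by rewrite ffunE !inE.
    by exists i => //; apply: contraT => iX; rewrite -(sub_notin cX iX) c_at ffunE.
  by rewrite cfg_at_sub // weight_at.
rewrite card_imset // => i j /ffunP /(_ j); rewrite !ffunE eqxx.
by move/eqP.
Qed.

End Configurations.

Arguments cfg0 {n}.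

Section SubsystemMatrices.
Variables (n : nat) (X : {set 'I_n}).
Implicit Types (a b c : cfg n) (f g : cfg n -> cfg n -> algC) (d : cfg n -> algC).

Definition cfg_mx f : 'M[algC]_#|sub X| := \matrix_(k, l) f (enum_val k) (enum_val l).

Definition cfg_diag d := cfg_mx (fun a b => (a == b)%:R * d a).

Lemma eq_cfg_mx f g : {in sub X &, f =2 g} -> cfg_mx f = cfg_mx g.
Proof. by move=> fg; apply/matrixP => k l; rewrite !mxE fg ?enum_valP. Qed.

Lemma cfg_mxM f g :
  cfg_mx f *m cfg_mx g = cfg_mx (fun a b => \sum_(c in sub X) f a c * g c b).
Proof.
apply/matrixP => k l; rewrite !mxE (big_enum_val (fun c => f _ c * g c _)).
by apply: eq_bigr => j _; rewrite !mxE.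
Qed.

Lemma cfg_mx1 : cfg_mx (fun a b => (a == b)%:R) = 1%:M.
Proof. by apply/matrixP => k l; rewrite !mxE (inj_eq enum_val_inj). Qed.

Lemma perm_eigs_cfg_diag d : perm_eq (eigs (cfg_diag d)) [seq d c | c <- enum (sub X)].
Proof.
apply: perm_eigs; rewrite char_poly_trig; last first.
  apply/is_trig_mxP => k l lt_kl; rewrite mxE (inj_eq enum_val_inj).
  by case: eqP lt_kl => [->|_]; rewrite ?ltnn ?mul0r.
rewrite big_map big_enum /= (big_enum_val (fun c => 'X - (d c)%:P)).
by apply: eq_bigr => k _; rewrite mxE eqxx mul1r.
Qed.

Lemma perm_eigs_cfg_diag_pair d u v : u \in sub X -> v \in sub X -> u != v ->
  {in sub X, forall c, c != u -> c != v -> d c = 0} ->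
  perm_eq (eigs (cfg_diag d)) [:: d u, d v & nseq (#|sub X| - 2) 0].
Proof.
move=> uX vX uv d0; have [s enumE sP] := perm_enum_pair uX vX uv.
apply: (perm_trans (perm_eigs_cfg_diag d)).
have -> : (#|sub X| - 2 = size s)%N by rewrite cardE (perm_size enumE) subn2.
apply: (perm_trans (perm_map d enumE)).
rewrite !map_cons; suff -> : map d s = nseq (size s) 0 by [].
apply: (@eq_from_nth _ 0); rewrite size_map ?size_nseq // => k lt_ks.
rewrite (nth_map u) // nth_nseq lt_ks.
by have [cX cu cv] := sP _ (mem_nth u lt_ks); apply: d0.
Qed.

Lemma HX_diag : HX X = cfg_diag (fun a => (weight a)%:R).
Proof.
apply/matrixP => k l; rewrite /HX summxE !mxE (weight_sub (enum_valP k)).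
by rewrite natr_sum mulr_sumr; apply: eq_bigr => i _; rewrite !mxE.
Qed.

Lemma sort_eigs_HX i0 : i0 \in X -> exists r, sort <=%R (eigs (HX X)) = [:: 0, 1 & r].
Proof.
move=> i0X.
have [s enumE sP] := perm_enum_pair (cfg0_sub X) (cfg_at_sub i0X) (cfg0_neq_at i0).
set ws := [seq (weight c)%:R : algC | c <- s].
have ws_ge1 : all (>= 1) ws.
  apply/allP => _ /mapP[c cs ->]; have [_ c_neq0 _] := sP c cs.
  by rewrite ler1n lt0n weight_eq0.
have ws_real : all (mem Num.real) ws by apply/allP => _ /mapP[c _ ->]; apply: realn.
have leT_total : {in Num.real &, total (<=%R : rel algC)}.
  by move=> x y xR yR; rewrite real_leVge.
exists (sort <=%R ws); rewrite HX_diag; apply: sort_eigs => //.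
- exact: le_trans.
- exact: le_anti.
- apply: (perm_trans (perm_eigs_cfg_diag _)); apply: (perm_trans (perm_map _ enumE)).
  by rewrite !map_cons weight_cfg0 weight_at !perm_cons perm_sym perm_sort.
- by rewrite /= real0 real1 all_sort.
- rewrite /= ler01 /=; have := sort_sorted_in leT_total ws_real.
  case sortE: (sort _ _) => [//|x s'] /= ->; rewrite andbT.
  by apply: (allP ws_ge1); rewrite -(mem_sort <=%R) sortE mem_head.
Qed.

Lemma passive_energy_HX i0 (M : 'M[algC]_#|sub X|) (a b : algC) : i0 \in X ->
  perm_eq (eigs M) [:: a, b & nseq (#|sub X| - 2) 0] -> b <= a -> 0 <= b ->
  passive_energy M (HX X) = b.
Proof.
move=> i0X eigsM ba b_ge0; have [r eigsH] := sort_eigs_HX i0X.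
apply: passive_energy_two_levels eigsM ba b_ge0 eigsH.
rewrite (cardD1 cfg0) cfg0_sub ltnS lt0n; apply/pred0Pn; exists (cfg_at i0).
by rewrite /= eq_sym cfg0_neq_at cfg_at_sub.
Qed.

End SubsystemMatrices.

Lemma rho_cfg_mx n (psi : state n) X : rho psi X =
  cfg_mx X (fun a b => \sum_(c in sub (~: X)) psi (glue X a c) * (psi (glue X b c))^*).
Proof. by []. Qed.

Lemma sqrtC_inv_mul_conj (x : algC) : 0 <= x -> (sqrtC x)^-1 * ((sqrtC x)^-1)^* = x^-1.
Proof.
move=> x_ge0; have sx_ge0 : 0 <= (sqrtC x)^-1 by rewrite invr_ge0 sqrtC_ge0.
by rewrite geC0_conj // -invfM -expr2 sqrtCK.
Qed.

Section GHZ.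
Variables (n : nat) (X : {set 'I_n}).
Hypotheses (X_neq0 : X != set0) (XC_neq0 : ~: X != set0).
Implicit Types a b c : cfg n.

Lemma GHZ_glue a c : a \in sub X -> c \in sub (~: X) ->
  GHZ n (glue X a c) = if ((a == cfg0) && (c == cfg0)) ||
                          ((a == cfg_on X) && (c == cfg_on (~: X)))
                       then (sqrtC 2)^-1 else 0.
Proof.
move=> aX cY; rewrite /GHZ -(eq_glue aX (cfg0_sub X) cY (cfg0_sub _)) glue_cfg0.
rewrite -(eq_glue aX (cfg_on_sub X) cY (cfg_on_sub _)) glue_cfg_on.
congr (if _ || _ then _ else _).
  apply/forallP/eqP => [ac0|-> i]; last by rewrite ffunE.
  by apply/ffunP => i; rewrite [RHS]ffunE; apply/negbTE.
apply/forallP/eqP => [ac1|ac1 i]; last by rewrite ac1 ffunE.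
by apply/ffunP => i; rewrite [RHS]ffunE; apply: ac1.
Qed.

Lemma rho_GHZ :
  rho (GHZ n) X = cfg_diag X (fun a => ((a == cfg0)%:R + (a == cfg_on X)%:R) / 2).
Proof.
rewrite rho_cfg_mx; apply: eq_cfg_mx => a b aX bX.
have c0_neq1 := cfg0_neq_on XC_neq0.
have term c : c \in sub (~: X) -> GHZ n (glue X a c) * (GHZ n (glue X b c))^* =
    ((a == cfg0) && (b == cfg0))%:R / 2 * (c == cfg0)%:R +
    ((a == cfg_on X) && (b == cfg_on X))%:R / 2 * (c == cfg_on (~: X))%:R.
  move=> cY; rewrite !GHZ_glue //.
  have : ~~ ((c == cfg0) && (c == cfg_on (~: X))).
    by apply: contra c0_neq1 => /andP[/eqP <- /eqP ->].
  case: (c == _); case: (c == _); case: (a == _); case: (a == _);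
    case: (b == _); case: (b == _) => //= _;
    by rewrite ?sqrtC_inv_mul_conj ?ler0n ?rmorph0 ?mulr0 ?mul0r ?mulr1 ?mul1r ?addr0 ?add0r.
rewrite (eq_bigr _ term) big_split /= !sumr_delta_r ?cfg0_sub ?cfg_on_sub //.
have [<-|ab] := eqVneq a b; first by rewrite !andbb mul1r mulrDl.
have ab_neq u : (a == u) && (b == u) = false.
  by apply/negbTE; apply: contra ab => /andP[/eqP-> /eqP->].
by rewrite !ab_neq !mul0r addr0.
Qed.

Lemma passive_energy_GHZ : passive_energy (rho (GHZ n) X) (HX X) = 2^-1.
Proof.
have [i0 i0X] := set0Pn _ X_neq0; have c0_neq1 := cfg0_neq_on X_neq0.
rewrite rho_GHZ; apply: (passive_energy_HX i0X) => //; last by rewrite invr_ge0 ler0n.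
have := perm_eigs_cfg_diag_pair
  (d := fun a => ((a == cfg0)%:R + (a == cfg_on X)%:R) / 2)
  (cfg0_sub X) (cfg_on_sub X) c0_neq1.
rewrite eqxx (negPf c0_neq1) eq_sym (negPf c0_neq1) eqxx addr0 add0r mul1r; apply.
by move=> c _ /negPf-> /negPf->; rewrite addr0 mul0r.
Qed.

End GHZ.

Lemma setC_neq0 n (X : {set 'I_n}) : X != setT -> ~: X != set0.
Proof. by apply: contra => /eqP XC0; rewrite -[X]setCK XC0 setC0. Qed.

Lemma Delta_GHZ n (X : {set 'I_n}) : X != set0 -> X != setT -> Delta (GHZ n) X = 1.
Proof.
move=> X_neq0 X_neqT; have XC_neq0 := setC_neq0 X_neqT.
rewrite /Delta (negPf X_neq0) (negPf X_neqT) passive_energy_GHZ //.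
by rewrite passive_energy_GHZ ?setCK // [RHS](splitr 1) mul1r.
Qed.

Section WState.
Variables (n : nat) (X : {set 'I_n}).
Implicit Types a b c : cfg n.

Definition single a : algC := (weight a == 1%N)%:R.
Definition vacuum a : algC := (weight a == 0%N)%:R.
Definition kron a b : algC := (a == b)%:R.

Definition W_marginal a b : algC :=
  single a * single b * n%:R^-1 + vacuum a * vacuum b * (#|~: X|%:R / n%:R).

Lemma rho_W : rho (Wst n) X = cfg_mx X W_marginal.
Proof.
rewrite rho_cfg_mx; apply: eq_cfg_mx => a b aX bX.
have term c : c \in sub (~: X) -> Wst n (glue X a c) * (Wst n (glue X b c))^* =
    (((weight a == 1%N) && (weight b == 1%N))%:R * (weight c == 0%N)%:R +
     ((weight a == 0%N) && (weight b == 0%N))%:R * (weight c == 1%N)%:R) * n%:R^-1.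
  move=> cY; rewrite /Wst -!/(weight _) !weight_glue //.
  case: (weight c) => [|[|?]]; case: (weight a) => [|[|?]]; case: (weight b) => [|[|?]];
  by rewrite /= ?rmorph0 ?mulr0 ?mul0r ?sqrtC_inv_mul_conj ?ler0n
             ?addr0 ?add0r ?mul1r ?mulr1 ?mul0r.
rewrite (eq_bigr _ term) -mulr_suml big_split /= -!mulr_sumr sum_weight0 sum_weight1.
rewrite /W_marginal /single /vacuum.
by case: (_ == 1%N); case: (_ == 1%N); case: (_ == 0%N); case: (_ == 0%N) => /=; ring.
Qed.

Variables (i0 : 'I_n) (i0X : i0 \in X).
Let e0 := cfg_at i0.

(* Eigenbasis of [W_marginal]: column [e0] is the (unnormalised) W state of
   [X], with eigenvalue [#|X| / n]; the columns [b - e0] for the other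
   one-excitation [b] span its kernel inside the one-excitation sector, and
   all remaining columns are basis vectors, the vacuum having eigenvalue
   [#|~: X| / n]. *)
Definition W_eigvecs a b : algC :=
  if b == e0 then single a else if weight b == 1%N then kron a b - kron a e0 else kron a b.

Definition W_eigvecs_inv a b : algC :=
  if weight b == 1%N then
    kron a b - kron b e0 * kron a e0 + #|X|%:R^-1 * (2 * kron a e0 - single a)
  else kron a b.

Definition W_eigvals a : algC :=
  (#|~: X|%:R / n%:R) * vacuum a + (#|X|%:R / n%:R) * kron a e0.

Let e0_sub : e0 \in sub X. Proof. exact: cfg_at_sub. Qed.
Let weight_e0 : weight e0 = 1%N. Proof. exact: weight_at. Qed.

Let kron_e0 c : weight c != 1%N -> kron c e0 = 0.
Proof. by apply: contraNeq; rewrite pnatr_eq0 eqb0 negbK => /eqP->; rewrite weight_e0. Qed.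

Lemma W_eigvecs_invK a b : a \in sub X -> b \in sub X ->
  \sum_(c in sub X) W_eigvecs_inv a c * W_eigvecs c b = kron a b.
Proof.
move=> aX bX; have X_neq0 : #|X|%:R != 0 :> algC.
  by rewrite pnatr_eq0 -lt0n; apply/card_gt0P; exists i0.
rewrite /W_eigvecs; case: (b =P e0) => [->|b_neq0].
  have term c : W_eigvecs_inv a c * single c =
      kron a c * single c - (fun=> kron a e0) c * kron c e0 +
      #|X|%:R^-1 * (2 * kron a e0 - single a) * single c.
    rewrite /W_eigvecs_inv /single; case: (boolP (weight c == 1%N)) => c1 /=.
      by rewrite mulr1; ring.
    by rewrite (kron_e0 c1); ring.
  rewrite (eq_bigr _ (fun c _ => term c)) !big_split /= sumrN.
  rewrite (sumr_delta_l single aX) (sumr_delta_r (fun=> kron a e0) e0_sub).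
  rewrite -mulr_sumr sum_weight1; move: (#|X|%:R : algC) X_neq0 => k k_neq0.
  by field.
case: (boolP (weight b == 1%N)) => b1; last first.
  by rewrite (sumr_delta_r (W_eigvecs_inv a) bX) /W_eigvecs_inv (negPf b1).
rewrite (eq_bigr _ (fun c _ => mulrBr _ _ _)) sumrB.
rewrite (sumr_delta_r (W_eigvecs_inv a) bX) (sumr_delta_r (W_eigvecs_inv a) e0_sub).
rewrite /W_eigvecs_inv b1 weight_e0 eqxx.
have -> : kron b e0 = 0 by rewrite /kron; case: eqP.
by rewrite /kron eqxx /= mul0r mul1r; ring.
Qed.

Lemma W_marginal_eigvecs a b : a \in sub X -> b \in sub X ->
  \sum_(c in sub X) W_marginal a c * W_eigvecs c b = W_eigvecs a b * W_eigvals b.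
Proof.
move=> aX bX; rewrite /W_eigvecs; case: (b =P e0) => [->|b_neq0].
  have term c : W_marginal a c * single c = single a * n%:R^-1 * single c.
    rewrite /W_marginal /single /vacuum; case: (boolP (weight c == 1%N)) => c1 /=.
      by rewrite (eqP c1) /=; ring.
    by rewrite !mulr0.
  rewrite (eq_bigr _ (fun c _ => term c)) -mulr_sumr sum_weight1.
  by rewrite /W_eigvals /kron eqxx /vacuum weight_e0 /=; ring.
case: (boolP (weight b == 1%N)) => b1.
  rewrite (eq_bigr _ (fun c _ => mulrBr _ _ _)) sumrB.
  rewrite (sumr_delta_r (W_marginal a) bX) (sumr_delta_r (W_marginal a) e0_sub).
  rewrite /W_marginal /W_eigvals /single /vacuum b1 weight_e0 /=.
  have -> : kron b e0 = 0 by rewrite /kron; case: eqP.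
  by rewrite (eqP b1) /=; ring.
rewrite (sumr_delta_r (W_marginal a) bX) /W_marginal /W_eigvals /single /vacuum.
rewrite (negPf b1) kron_e0 //= !mulr0 mul0r add0r addr0.
case: (boolP (weight b == 0%N)) => b0; last by rewrite /= !mulr0 mul0r.
by move: (b0); rewrite weight_eq0 => /eqP ->; rewrite /kron weight_eq0 /= !mulr1.
Qed.

Lemma eigs_W_marginal : eigs (cfg_mx X W_marginal) = eigs (cfg_diag X W_eigvals).
Proof.
rewrite /eigs (@char_poly_similar _ _ (cfg_mx X W_eigvecs) (cfg_diag X W_eigvals)) //.
  have : cfg_mx X W_eigvecs_inv *m cfg_mx X W_eigvecs = 1%:M.
    by rewrite cfg_mxM -cfg_mx1; apply: eq_cfg_mx => a b aX bX; apply: W_eigvecs_invK.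
  by case/mulmx1_unit.
rewrite !cfg_mxM; apply: eq_cfg_mx => a b aX bX; rewrite W_marginal_eigvecs //.
rewrite -(sumr_delta_r (fun c => W_eigvecs a c * W_eigvals c) bX).
by apply: eq_bigr => c _; ring.
Qed.

Lemma passive_energy_W :
  passive_energy (rho (Wst n) X) (HX X) = (minn #|X| #|~: X|)%:R / n%:R.
Proof.
have vac_e0 := cfg0_neq_at i0.
have eig_vac : W_eigvals cfg0 = #|~: X|%:R / n%:R.
  by rewrite /W_eigvals /vacuum /kron weight_cfg0 eqxx (negPf vac_e0) /= mulr1 mulr0 addr0.
have eig_e0 : W_eigvals e0 = #|X|%:R / n%:R.
  by rewrite /W_eigvals /vacuum /kron weight_e0 eqxx /= mulr0 add0r mulr1.
have eig0 : {in sub X, forall c, c != cfg0 -> c != e0 -> W_eigvals c = 0}.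
  move=> c _ c_neq0 c_neq_e0; rewrite /W_eigvals /vacuum /kron weight_eq0.
  by rewrite (negPf c_neq0) (negPf c_neq_e0) /= !mulr0 addr0.
have ler_card k l : (k <= l)%N -> k%:R / n%:R <= l%:R / n%:R :> algC.
  by move=> kl; rewrite ler_wpM2r ?invr_ge0 ?ler0n ?ler_nat.
rewrite rho_W; case: (leqP #|X| #|~: X|) => [le_X | /ltnW le_XC].
  apply: (passive_energy_HX (a := #|~: X|%:R / n%:R) i0X).
  - rewrite eigs_W_marginal -eig_vac -eig_e0.
    exact: perm_eigs_cfg_diag_pair (cfg0_sub X) e0_sub vac_e0 eig0.
  - exact: ler_card.
  - by rewrite divr_ge0 ?ler0n.
apply: (passive_energy_HX (a := #|X|%:R / n%:R) i0X).
- rewrite eigs_W_marginal -eig_vac -eig_e0.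
  apply: perm_eigs_cfg_diag_pair e0_sub (cfg0_sub X) _ _; first by rewrite eq_sym.
  by move=> c cX c_neq_e0 c_neq0; apply: eig0.
- exact: ler_card.
- by rewrite divr_ge0 ?ler0n.
Qed.

End WState.

Lemma Delta_W n (X : {set 'I_n}) :
  Delta (Wst n) X = 2 * (minn #|X| (n - #|X|))%:R / n%:R.
Proof.
have cardXC : #|~: X| = (n - #|X|)%N by rewrite cardsCs setCK card_ord.
rewrite /Delta; have [->|X_neq0] := eqVneq X set0; first by rewrite cards0 min0n mulr0 mul0r.
have [->|X_neqT] := eqVneq X setT.
  by rewrite orbT cardsT card_ord subnn minn0 mulr0 mul0r.
have [i0 i0X] := set0Pn _ X_neq0; have [i1 i1XC] := set0Pn _ (setC_neq0 X_neqT).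
rewrite /= (passive_energy_W i0X) (passive_energy_W i1XC) setCK cardXC minnC.
by rewrite -mulrA (mulr_natl (_ / _) 2) mulr2n.
Qed.

Lemma ME_setT n (psi : state n) :
  ME [set: 'I_n] psi = (2 ^+ n)^-1 * \sum_(X : {set 'I_n}) Delta psi X.
Proof.
by rewrite /ME cardsT card_ord; congr (_ * _); apply: eq_bigl => X; rewrite subsetT.
Qed.

Lemma ME_GHZ n : (0 < n)%N -> ME [set: 'I_n] (GHZ n) = 1 - (2 ^+ n.-1)^-1.
Proof.
move=> n_gt0; have setT_neq0 : [set: 'I_n] != set0.
  by apply/set0Pn; exists (Ordinal n_gt0).
have DeltaE X : Delta (GHZ n) X = 1 - (X == set0)%:R - (X == setT)%:R.
  have [->|X_neq0] := eqVneq X set0.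
    by rewrite /Delta eqxx eq_sym (negPf setT_neq0) subrr subr0.
  have [->|X_neqT] := eqVneq X setT; first by rewrite /Delta eqxx orbT subr0 subrr.
  by rewrite Delta_GHZ // !subr0.
have sum_eq1 (Y : {set 'I_n}) : \sum_(X : {set 'I_n}) (X == Y)%:R = 1 :> algC.
  by rewrite (bigD1 Y) //= eqxx big1 ?addr0 // => X /negPf->.
rewrite ME_setT (eq_bigr _ (fun X _ => DeltaE X)) !sumrB !sum_eq1 sumr_const.
rewrite card_set_of card_ord -mulr_natl mulr1 natrX -(prednK n_gt0) exprS.
by field; rewrite expf_neq0 ?pnatr_eq0.
Qed.

Lemma ME_W n : (0 < n)%N ->
  ME [set: 'I_n] (Wst n) = 1 - (2 ^+ n.-1)^-1 * ('C(n.-1, n.-1./2))%:R.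
Proof.
move=> n_gt0; have n_neq0 : n%:R != 0 :> algC by rewrite pnatr_eq0 -lt0n.
have sumE : \sum_(X : {set 'I_n}) Delta (Wst n) X =
    2 / n%:R * (\sum_(k < n.+1) 'C(n, k) * minn k (n - k))%:R.
  have := sum_set_card 'I_n (fun k => minn k (n - k)); rewrite card_ord => <-.
  by rewrite natr_sum mulr_sumr; apply: eq_bigr => X _; rewrite Delta_W mulrAC.
rewrite ME_setT sumE; have := congr1 (fun k => k%:R : algC) (sum_bin_mul_minn n_gt0).
rewrite /= natrD !natrM natrX => /(canRL (addrK _)) ->.
rewrite -[in 2 ^+ n](prednK n_gt0) exprS.
by field; rewrite n_neq0 andbT expf_neq0 ?pnatr_eq0.
Qed.

Theorem mainTheorem7 (n : nat) (hn : (3 <= n)%N) :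
  ME [set: 'I_n] (GHZ n) = 1 - (2 ^+ n.-1)^-1 /\
  ME [set: 'I_n] (Wst n) = 1 - (2 ^+ n.-1)^-1 * ('C(n.-1, n.-1./2))%:R /\
  ME [set: 'I_n] (Wst n) < ME [set: 'I_n] (GHZ n).
Proof.
have n_gt0 : (0 < n)%N by apply: leq_trans hn.
rewrite ME_GHZ // ME_W //; split=> //; split=> //.
rewrite ltrD2l ltrN2 -[X in X < _]mulr1 ltr_pM2l ?invr_gt0 ?exprn_gt0 ?ltr0n //.
by rewrite ltr1n bin_half_gt1.
Qed.
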